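(* Let $F\in SL(d,\mathbb{Z})$ be partially hyperbolic with invariant splitting $\mathbb{R}^d=S\oplus C\oplus U$. Then $F$ is Katznelson irreducible (i.e. $C\cap\mathbb{Z}^d=\{0\}$) if and only if there is no non-constant factor $\eta(x)\in\mathbb{Q}[x]$ of the characteristic polynomial of $F$ all of whose roots are eigenvalues of $F|_C$.
   Context: Partial hyperbolicity of $F$ with respect to the $F$-invariant linear splitting $S\oplus C\oplus U$: for some metric, $\|F|_S\|<1$, $m(F|_U)>1$, $\|F|_S\|<m(F|_C)$, $m(F|_U)>\|F|_C\|$, where $m$ denotes the conorm. *)

From HB Require Import structures.
From mathcomp Require Import all_boot all_order all_algebra.
From mathcomp Require Import classical_sets reals constructive_ereal ereal.
From mathcomp.real_closed Require Import complex.

Set Implicit Arguments.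
Unset Strict Implicit.
Unset Printing Implicit Defensive.

Import Order.TTheory GRing.Theory Num.Theory.
Local Open Scope ring_scope.
Local Open Scope classical_set_scope.

(* Vectors of R^d are row vectors 'rV[R]_d; a linear subspace of R^d is
   represented by the row space of a matrix V : 'M[R]_d (mxalgebra).
   A matrix A : 'M_d acts as the linear map v |-> A v on column vectors,
   i.e. on row vectors as v |-> v *m A^T. *)

Section Defs.
Variable R : realType.
Variable d : nat.

Definition int_to_real_mx m n (M : 'M[int]_(m, n)) : 'M[R]_(m, n) :=
  map_mx (fun z : int => z%:~R) M.

Definition lin_apply (A : 'M[R]_d) (v : 'rV[R]_d) : 'rV[R]_d := v *m A^T.

Definition mx_invariant (A : 'M[R]_d) (V : 'M[R]_d) : bool := stablemx V A^T.

Definition invariant_splitting (A S C U : 'M[R]_d) : Prop :=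
  [/\ mx_invariant A S, mx_invariant A C, mx_invariant A U,
      (S + C + U == 1%:M)%MS & mxdirect (S + C + U)].

(* a metric on R^d: an inner product <u,v> = u Q v^T, Q symmetric positive definite *)
Definition inner_product_mx (Q : 'M[R]_d) : Prop :=
  Q^T = Q /\ forall v : 'rV[R]_d, v != 0 -> 0 < (v *m Q *m v^T) 0 0.

Definition qnorm (Q : 'M[R]_d) (v : 'rV[R]_d) : R :=
  Num.sqrt ((v *m Q *m v^T) 0 0).

Definition unit_sphere (Q V : 'M[R]_d) : set 'rV[R]_d :=
  [set v | (v <= V)%MS /\ qnorm Q v = 1].

(* operator norm ||A|_V|| = sup_{v in V, |v| = 1} |A v|  (= -oo if V = 0) *)
Definition restr_norm (Q A V : 'M[R]_d) : \bar R :=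
  ereal_sup [set (qnorm Q (lin_apply A v))%:E | v in unit_sphere Q V].

(* conorm m(A|_V) = inf_{v in V, |v| = 1} |A v|  (= +oo if V = 0) *)
Definition restr_conorm (Q A V : 'M[R]_d) : \bar R :=
  ereal_inf [set (qnorm Q (lin_apply A v))%:E | v in unit_sphere Q V].

Definition partially_hyperbolic (A S C U : 'M[R]_d) : Prop :=
  invariant_splitting A S C U /\
  exists Q : 'M[R]_d, inner_product_mx Q /\
    [/\ (restr_norm Q A S < 1%:E)%E,
        (1%:E < restr_conorm Q A U)%E,
        (restr_norm Q A S < restr_conorm Q A C)%E &
        (restr_norm Q A C < restr_conorm Q A U)%E].

Definition katznelson_irreducible (C : 'M[R]_d) : Prop :=
  forall z : 'rV[int]_d, (int_to_real_mx z <= C)%MS -> z = 0.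

(* lambda in C is an eigenvalue of A|_V (restriction to V, complexified) *)
Definition restr_eigenvalue (A V : 'M[R]_d) (lambda : complex R) : Prop :=
  exists w : 'rV[complex R]_d,
    [/\ w != 0,
        (w <= map_mx (real_complex R) V)%MS &
        w *m (map_mx (real_complex R) A)^T = lambda *: w].

End Defs.

Definition char_poly_Q d (F : 'M[int]_d) : {poly rat} :=
  char_poly (map_mx (fun z : int => z%:~R) F : 'M[rat]_d).

(* Suppose first that z is a nonzero integer vector in C, and let eta be its
   minimal annihilating polynomial over Q with respect to F.  Then eta divides
   the characteristic polynomial of F, and for every complex root lambda of eta,
   writing eta = g (X - lambda), the vector g(F) z is a lambda-eigenvector lying
   in the F-cyclic span of z, hence in C; it is nonzero because z, F z, ...,
   F^(deg eta - 1) z are independent over Q, hence over C.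
   Conversely, if every root of a rational factor eta of the characteristic
   polynomial is an eigenvalue of F on C, then eta(F) is singular and its kernel
   contains a nonzero integer vector z = s + c + u.  A nonzero s would produce
   an eigenvalue lambda of F on S that is a root of eta, hence also an eigenvalue
   of F on C; but then ||F|_S|| >= |lambda| >= m(F|_C), contradicting partial
   hyperbolicity.  The same holds for u, so z lies in C. *)

From HB Require Import structures.
From mathcomp Require Import all_boot all_order all_algebra.
From mathcomp Require Import classical_sets reals constructive_ereal ereal.
From mathcomp.real_closed Require Import complex.
From mathcomp Require Import ring.
From Stdlib Require Import Classical.
Import Order.TTheory GRing.Theory Num.Theory.

Set Implicit Arguments.
Unset Strict Implicit.
Unset Printing Implicit Defensive.

Local Open Scope ring_scope.

Local Notation mxC := (map_mx (real_complex _)).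
Local Notation mxZ := (map_mx (fun z : int => z%:~R)).

Lemma horner_mx_trmx (K : comNzRingType) n (A : 'M[K]_n.+1) p :
  (horner_mx A p)^T = horner_mx A^T p.
Proof.
elim/poly_ind: p => [|p c IH]; first by rewrite !rmorph0 trmx0.
rewrite !rmorphD !rmorphM /= !horner_mx_X !horner_mx_C linearD /= trmx_mul IH.
by rewrite tr_scalar_mx; congr (_ + _); apply/esym/comm_horner_mx/comm_mx_refl.
Qed.

Lemma horner_mx_eigenvector (K : comNzRingType) n (B : 'M[K]_n.+1)
    (w : 'rV[K]_n.+1) l p :
  w *m B = l *: w -> w *m horner_mx B p = p.[l] *: w.
Proof.
move=> wB; elim/poly_ind: p => [|p c IH].
  by rewrite !rmorph0 mulmx0 horner0 scale0r.
rewrite !rmorphD !rmorphM /= horner_mx_X horner_mx_C mulmxDr mulmxA IH -scalemxAl wB.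
by rewrite mul_mx_scalar scalerA hornerD hornerMX hornerC scalerDl.
Qed.

Section MinimalAnnihilator.
Variables (K : fieldType) (n : nat) (B : 'M[K]_n.+1) (z : 'rV[K]_n.+1).

Definition min_annihilator (p : {poly K}) : Prop :=
  [/\ p != 0, z *m horner_mx B p = 0 &
      forall q, q != 0 -> z *m horner_mx B q = 0 -> (size p <= size q)%N].

Lemma min_annihilator_exists : exists p, min_annihilator p.
Proof.
have [k] : exists k, exists p : {poly K},
    [/\ size p = k, p != 0 & z *m horner_mx B p = 0].
  exists (size (char_poly B)), (char_poly B).
  by rewrite monic_neq0 ?char_poly_monic // Cayley_Hamilton mulmx0.
elim/ltn_ind: k => k IH [p [size_p p0 zp]]; subst k.
have [[q [q0 zq lt_qp]] | no_smaller] :=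
  classic (exists q, [/\ q != 0, z *m horner_mx B q = 0 & (size q < size p)%N]).
  by apply: (IH (size q) lt_qp); exists q.
exists p; split=> // q q0 zq; rewrite leqNgt; apply/negP=> lt_qp.
by apply: no_smaller; exists q.
Qed.

Lemma min_annihilator_dvdp p q :
  min_annihilator p -> z *m horner_mx B q = 0 -> p %| q.
Proof.
move=> [p0 zp minp] zq; apply/modp_eq0P/eqP/negPn/negP => r0.
suff /(minp _ r0) : z *m horner_mx B (q %% p) = 0 by rewrite leqNgt ltn_modp p0.
move: zq; rewrite {1}(divp_eq q p) mulrC rmorphD rmorphM /= mulmxDr mulmxA zp.
by rewrite mul0mx add0r.
Qed.

Lemma min_annihilator_size_gt1 p : z != 0 -> min_annihilator p -> (1 < size p)%N.
Proof.
move=> z0 [p0 zp _]; rewrite ltnNge; apply/negP=> /size1_polyC pC.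
move: zp p0; rewrite pC horner_mx_C mul_mx_scalar polyC_eq0 => /eqP.
by rewrite scalemx_eq0 (negPf z0) orbF => ->.
Qed.

Definition krylov k : 'M[K]_(k, n.+1) := \matrix_(i < k) (z *m B ^+ i).

Lemma mulmx_krylov k (c : 'rV[K]_k) : c *m krylov k = z *m horner_mx B (rVpoly c).
Proof.
rewrite [rVpoly c]poly_def linear_sum mulmx_sumr mulmx_sum_row.
apply: eq_bigr => i _.
by rewrite valK linearZ /= rmorphXn /= horner_mx_X rowK scalemxAr.
Qed.

Lemma min_annihilator_krylov_free p :
  min_annihilator p -> row_free (krylov (size p).-1).
Proof.
move=> [p0 _ minp]; apply/negPn/negP; rewrite -kermx_eq0.
case/rowV0Pn => c /sub_kermxP c0 nz_c.
have nz_cp : rVpoly c != 0.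
  by apply: contra nz_c => /eqP c_0; rewrite -[c]rVpolyK c_0 linear0.
have := minp _ nz_cp; rewrite -mulmx_krylov c0 => /(_ erefl).
by rewrite leqNgt (leq_ltn_trans (size_poly _ _)) // ltn_predL size_poly_gt0.
Qed.

End MinimalAnnihilator.

Lemma map_krylov (K L : fieldType) (f : {rmorphism K -> L}) n (B : 'M[K]_n.+1) z k :
  map_mx f (krylov B z k) = krylov (map_mx f B) (map_mx f z) k.
Proof. by apply/row_matrixP => i; rewrite -map_row !rowK map_mxM rmorphXn. Qed.

Lemma min_annihilator_root_eigenvector (K L : fieldType) (f : {rmorphism K -> L}) n
    (B : 'M[K]_n.+1) z (V : 'M[L]_n.+1) p l :
  min_annihilator B z p -> stablemx V (map_mx f B) -> (map_mx f z <= V)%MS ->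
  root (map_poly f p) l ->
  exists w : 'rV[L]_n.+1, [/\ w != 0, (w <= V)%MS & w *m map_mx f B = l *: w].
Proof.
move=> minp sVB zV pl; have [p0 zp _] := minp.
have [g pE] : exists g, map_poly f p = g * ('X - l%:P).
  by exists (map_poly f p %/ ('X - l%:P)); rewrite divpK // dvdp_XsubCl.
have g0 : g != 0.
  by apply: contraNneq p0 => g_0; rewrite -(map_poly_eq0 f) pE g_0 mul0r.
have size_g : size g = (size p).-1.
  by rewrite -(size_map_poly f) pE size_Mmonic ?monicXsubC // size_XsubC addn2.
exists (map_mx f z *m horner_mx (map_mx f B) g); split.
- have free_fK : row_free (map_mx f (krylov B z (size p).-1)).
    by rewrite /row_free mxrank_map; exact: min_annihilator_krylov_free.
  have gE : g = rVpoly (poly_rV g : 'rV_(size p).-1) by rewrite poly_rV_K ?size_g.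
  apply: contra g0 => /eqP zg; rewrite gE.
  suff -> : poly_rV g = 0 :> 'rV_(size p).-1 by rewrite linear0.
  by apply: (row_free_inj free_fK); rewrite mul0mx map_krylov mulmx_krylov -gE.
- exact: submx_trans (submxMr _ zV) (horner_mx_stable _ sVB).
- have : map_mx f z *m horner_mx (map_mx f B) (map_poly f p) = 0.
    by rewrite -map_horner_mx -map_mxM zp map_mx0.
  rewrite pE rmorphM rmorphB /= horner_mx_X horner_mx_C mulmxA mulmxBr mul_mx_scalar.
  by move/eqP; rewrite subr_eq0 => /eqP.
Qed.

Lemma annihilator_root_eigenvector (L : closedFieldType) n (B V : 'M[L]_n.+1)
    (s : 'rV[L]_n.+1) p :
  stablemx V B -> s != 0 -> (s <= V)%MS -> s *m horner_mx B p = 0 ->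
  exists2 l, root p l &
    exists w : 'rV[L]_n.+1, [/\ w != 0, (w <= V)%MS & w *m B = l *: w].
Proof.
move=> sVB s0 sV sp; have [q minq] := min_annihilator_exists B s.
have /closed_rootP [l ql] : size q != 1%N.
  by rewrite gtn_eqF // (min_annihilator_size_gt1 s0 minq).
exists l.
  have /dvdpP [r ->] := min_annihilator_dvdp minq sp.
  by rewrite rootM ql orbT.
have := min_annihilator_root_eigenvector (f := idfun) minq.
by rewrite map_mx_id // map_poly_id // map_mx_id //; apply.
Qed.

Section DirectSum.
Variables (K : fieldType) (n : nat) (S C U : 'M[K]_n).
Hypothesis dirSCU : mxdirect (S + C + U).

Lemma mxdirect_adds3_eq0 (s c u : 'rV[K]_n) :
  (s <= S)%MS -> (c <= C)%MS -> (u <= U)%MS -> s + c + u = 0 ->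
  [/\ s = 0, c = 0 & u = 0].
Proof.
move: dirSCU; rewrite !mxdirect_addsE.
case/and3P => /and3P [_ _ /eqP capSC] _ /eqP capSCU.
move=> sS cC uU /eqP; rewrite addr_eq0 => /eqP scE.
have u0 : u = 0.
  apply/eqP; rewrite -submx0 -capSCU sub_capmx uU -eqmx_opp -scE addmx_sub_adds //.
move: scE; rewrite u0 oppr0 => /eqP; rewrite addr_eq0 => /eqP sE.
have s0 : s = 0.
  by apply/eqP; rewrite -submx0 -capSC sub_capmx sS sE eqmx_opp.
by split=> //; apply/eqP; rewrite -oppr_eq0 -sE s0.
Qed.

Lemma kermx_sub_center (P : 'M[K]_n) (x : 'rV[K]_n) :
  (S + C + U == 1%:M)%MS -> stablemx S P -> stablemx C P -> stablemx U P ->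
  (forall s : 'rV[K]_n, (s <= S)%MS -> s *m P = 0 -> s = 0) ->
  (forall u : 'rV[K]_n, (u <= U)%MS -> u *m P = 0 -> u = 0) ->
  x *m P = 0 -> (x <= C)%MS.
Proof.
move=> /andP [_ full] sSP sCP sUP injS injU xP.
have /sub_addsmxP [[y u] /= xE] := submx_trans (submx1 x) full.
have /sub_addsmxP [[s c] /= yE] := submxMl y (S + C)%MS.
set s' := s *m S in yE; set c' := c *m C in yE; set u' := u *m U in xE.
have stable_mul (V : 'M[K]_n) v : stablemx V P -> (v *m V *m P <= V)%MS.
  by move=> sVP; apply: submx_trans (submxMr _ (submxMl _ _)) sVP.
have [sP0 _ uP0] : [/\ s' *m P = 0, c' *m P = 0 & u' *m P = 0].
  by apply: mxdirect_adds3_eq0; rewrite ?stable_mul // -!mulmxDl -yE -xE.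
rewrite xE yE (injS s' (submxMl _ _) sP0) (injU u' (submxMl _ _) uP0).
by rewrite add0r addr0 submxMl.
Qed.

End DirectSum.

Section RealAndImaginaryParts.
Variable R : realType.
Local Notation mxRe := (map_mx (@complex.Re R)).
Local Notation mxIm := (map_mx (@complex.Im R)).

Lemma mxRe_mul_real m k p (w : 'M[R[i]]_(m, k)) (B : 'M[R]_(k, p)) :
  mxRe (w *m mxC B) = mxRe w *m B.
Proof.
apply/matrixP => i j; rewrite !mxE (raddf_sum (@complex.Re R : Rcomplex R -> R)).
by apply: eq_bigr => l _; rewrite !mxE; case: (w i l) => a b /=; rewrite mulr0 subr0.
Qed.

Lemma mxIm_mul_real m k p (w : 'M[R[i]]_(m, k)) (B : 'M[R]_(k, p)) :
  mxIm (w *m mxC B) = mxIm w *m B.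
Proof.
apply/matrixP => i j; rewrite !mxE (raddf_sum (@complex.Im R : Rcomplex R -> R)).
by apply: eq_bigr => l _; rewrite !mxE; case: (w i l) => a b /=; rewrite mulr0 add0r.
Qed.

Lemma mxRe_scale m k l (w : 'M[R[i]]_(m, k)) :
  mxRe (l *: w) = complex.Re l *: mxRe w - complex.Im l *: mxIm w.
Proof. by apply/matrixP => i j; rewrite !mxE; case: l; case: (w i j). Qed.

Lemma mxIm_scale m k l (w : 'M[R[i]]_(m, k)) :
  mxIm (l *: w) = complex.Im l *: mxRe w + complex.Re l *: mxIm w.
Proof.
by apply/matrixP => i j; rewrite !mxE; case: l; case: (w i j) => a b c e /=; rewrite addrC.
Qed.

Lemma mxReIm_eq0 m k (w : 'M[R[i]]_(m, k)) : mxRe w = 0 -> mxIm w = 0 -> w = 0.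
Proof.
move=> /matrixP Re0 /matrixP Im0; apply/matrixP => i j.
by move: (Re0 i j) (Im0 i j); rewrite !mxE; case: (w i j) => a b /= -> ->.
Qed.

Lemma mxReIm_sub m n k (w : 'M[R[i]]_(m, k)) (V : 'M[R]_(n, k)) :
  (w <= mxC V)%MS -> (mxRe w <= V)%MS /\ (mxIm w <= V)%MS.
Proof. by case/submxP => D ->; rewrite mxRe_mul_real mxIm_mul_real !submxMl. Qed.

End RealAndImaginaryParts.

Lemma exists_nonzero_le (R : realDomainType) (T : zmodType) (P : T -> Prop)
    (f g : T -> R) a b :
  P a -> P b -> (a != 0) || (b != 0) -> f 0 = g 0 -> f a + f b <= g a + g b ->
  exists v, [/\ v != 0, P v & f v <= g v].
Proof.
move=> Pa Pb ab0 fg0 fgab.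
have [a0 | nz_a] := eqVneq a 0.
  exists b; split=> //; first by move: ab0; rewrite a0 eqxx.
  by move: fgab; rewrite a0 fg0 lerD2l.
have [fga | gfa] := lerP (f a) (g a); first by exists a.
have [b0 | nz_b] := eqVneq b 0.
  by move: fgab; rewrite b0 fg0 lerD2r leNgt gfa.
by exists b; split=> //; apply: contraTT fgab; rewrite -!ltNge => gfb; rewrite ltrD.
Qed.

Section QuadraticForm.
Variables (R : realType) (d : nat) (Q : 'M[R]_d).
Hypothesis Q_inner : inner_product_mx Q.

Definition qform (x y : 'rV[R]_d) : R := (x *m Q *m y^T) 0 0.

Lemma qformDl a b x y z : qform (a *: x + b *: y) z = a * qform x z + b * qform y z.
Proof. by rewrite /qform !mulmxDl -!scalemxAl !mxE. Qed.

Lemma qformDr a b x y z : qform z (a *: x + b *: y) = a * qform z x + b * qform z y.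
Proof. by rewrite /qform linearD !linearZ /= mulmxDr -!scalemxAr !mxE. Qed.

Lemma qform0 : qform 0 0 = 0.
Proof. by rewrite /qform !mul0mx mxE. Qed.

Lemma qnorm_gt0 v : v != 0 -> 0 < qnorm Q v.
Proof. by move/Q_inner.2; rewrite sqrtr_gt0. Qed.

Lemma qformZ c v : qform (c *: v) (c *: v) = c ^+ 2 * qform v v.
Proof. by rewrite /qform linearZ /= -!scalemxAl -scalemxAr scalerA mxE expr2. Qed.

Lemma qnormE v : qnorm Q v = Num.sqrt (qform v v).
Proof. by []. Qed.

Lemma qnormZ c v : qnorm Q (c *: v) = `|c| * qnorm Q v.
Proof. by rewrite !qnormE qformZ sqrtrM ?sqr_ge0 // sqrtr_sqr. Qed.

Lemma unit_sphere_normalize V v :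
  v != 0 -> (v <= V)%MS -> unit_sphere Q V ((qnorm Q v)^-1 *: v).
Proof.
move=> v0 vV; split; first by rewrite scalemx_sub.
by rewrite qnormZ ger0_norm ?invr_ge0 ?sqrtr_ge0 // mulVf // gt_eqF // qnorm_gt0.
Qed.

Lemma qnorm_apply_normalize A v :
  qnorm Q (lin_apply A ((qnorm Q v)^-1 *: v)) = qnorm Q (lin_apply A v) / qnorm Q v.
Proof.
by rewrite /lin_apply -scalemxAl qnormZ ger0_norm ?invr_ge0 ?sqrtr_ge0 // mulrC.
Qed.

Lemma restr_norm_ge A V v : v != 0 -> (v <= V)%MS ->
  ((qnorm Q (lin_apply A v) / qnorm Q v)%:E <= restr_norm Q A V)%E.
Proof.
move=> v0 vV; rewrite -qnorm_apply_normalize; apply: ereal_sup_ubound.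
by exists ((qnorm Q v)^-1 *: v); first exact: unit_sphere_normalize.
Qed.

Lemma restr_conorm_le A V v : v != 0 -> (v <= V)%MS ->
  (restr_conorm Q A V <= (qnorm Q (lin_apply A v) / qnorm Q v)%:E)%E.
Proof.
move=> v0 vV; rewrite -qnorm_apply_normalize; apply: ereal_inf_lbound.
by exists ((qnorm Q v)^-1 *: v); first exact: unit_sphere_normalize.
Qed.

(* If w = a + i b and w B = l w, then |a B|^2 + |b B|^2 = |l|^2 (|a|^2 + |b|^2), so
   one of a, b is stretched by at least |l| and one by at most |l|. *)
Lemma restr_eigenvalue_witnesses A V l : restr_eigenvalue A V l ->
  let r2 := complex.Re l ^+ 2 + complex.Im l ^+ 2 in
  (exists v, [/\ v != 0, (v <= V)%MS &
     r2 * qform v v <= qform (lin_apply A v) (lin_apply A v)]) /\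
  (exists v, [/\ v != 0, (v <= V)%MS &
     qform (lin_apply A v) (lin_apply A v) <= r2 * qform v v]).
Proof.
move=> [w [w0 wV]]; rewrite map_trmx => wA r2.
set a := map_mx (@complex.Re R) w; set b := map_mx (@complex.Im R) w.
have [aV bV] := mxReIm_sub wV.
pose stretched v := qform (lin_apply A v) (lin_apply A v).
have aA : lin_apply A a = complex.Re l *: a + (- complex.Im l) *: b.
  by rewrite /lin_apply /a -mxRe_mul_real wA mxRe_scale scaleNr.
have bA : lin_apply A b = complex.Im l *: a + complex.Re l *: b.
  by rewrite /lin_apply /b -mxIm_mul_real wA mxIm_scale.
have energy : stretched a + stretched b = r2 * qform a a + r2 * qform b b.
  by rewrite /stretched aA bA !qformDl !qformDr /r2; ring.
have ab0 : (a != 0) || (b != 0).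
  apply: contraNT w0 => /norP [/negPn/eqP a0 /negPn/eqP b0].
  by rewrite (mxReIm_eq0 a0 b0).
have at0 : r2 * qform 0 0 = stretched 0.
  by rewrite /stretched /lin_apply mul0mx qform0 mulr0.
split.
- by apply: (exists_nonzero_le (g := stretched) aV bV ab0 at0); rewrite energy.
- by apply: (exists_nonzero_le (f := stretched) aV bV ab0 (esym at0)); rewrite energy.
Qed.

Lemma restr_eigenvalue_norm_ge A V l : restr_eigenvalue A V l ->
  ((Num.sqrt (complex.Re l ^+ 2 + complex.Im l ^+ 2))%:E <= restr_norm Q A V)%E.
Proof.
case/restr_eigenvalue_witnesses => [[v [v0 vV lev]] _].
apply: le_trans (restr_norm_ge A v0 vV); rewrite lee_fin ler_pdivlMr ?qnorm_gt0 //.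
by rewrite !qnormE -sqrtrM ?addr_ge0 ?sqr_ge0 // ler_wsqrtr.
Qed.

Lemma restr_eigenvalue_conorm_le A V l : restr_eigenvalue A V l ->
  (restr_conorm Q A V <= (Num.sqrt (complex.Re l ^+ 2 + complex.Im l ^+ 2))%:E)%E.
Proof.
case/restr_eigenvalue_witnesses => [_ [v [v0 vV lev]]].
apply: le_trans (restr_conorm_le A v0 vV) _; rewrite lee_fin ler_pdivrMr ?qnorm_gt0 //.
by rewrite !qnormE -sqrtrM ?addr_ge0 ?sqr_ge0 // ler_wsqrtr.
Qed.

Lemma separated_restr_eigenvalue A V1 V2 l :
  (restr_norm Q A V1 < restr_conorm Q A V2)%E ->
  restr_eigenvalue A V1 l -> ~ restr_eigenvalue A V2 l.
Proof.
move=> sep /(restr_eigenvalue_norm_ge) le1 /(restr_eigenvalue_conorm_le) le2.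
by have := lt_le_trans (le_lt_trans le1 sep) le2; rewrite ltxx.
Qed.

End QuadraticForm.

Lemma restr_eigenvalue_of_kernel (R : realType) n (A V : 'M[R]_n.+1)
    (s : 'rV[R]_n.+1) p :
  mx_invariant A V -> s != 0 -> (s <= V)%MS -> s *m horner_mx A^T p = 0 ->
  exists2 l, root (map_poly (real_complex R) p) l & restr_eigenvalue A V l.
Proof.
move=> AV s0 sV sp.
have AVC : stablemx (mxC V) (mxC A^T) by rewrite -map_mxM map_submx.
have s0C : mxC s != 0 by rewrite map_mx_eq0.
have sVC : (mxC s <= mxC V)%MS by rewrite map_submx.
have spC : mxC s *m horner_mx (mxC A^T) (map_poly (real_complex R) p) = 0.
  by rewrite -map_horner_mx -map_mxM sp map_mx0.
have [l pl [w [w0 wV wA]]] := annihilator_root_eigenvector AVC s0C sVC spC.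
by exists l => //; exists w; rewrite map_trmx.
Qed.

Lemma map_mx_intmx (A B : nzRingType) (f : {rmorphism A -> B}) m n
    (M : 'M[int]_(m, n)) :
  map_mx f (mxZ M) = mxZ M.
Proof. by apply/matrixP => i j; rewrite !mxE rmorph_int. Qed.

Lemma rat_row_int_multiple n (v : 'rV[rat]_n) :
  exists z : 'rV[int]_n, exists2 c : rat, c != 0 & mxZ z = c *: v.
Proof.
exists (\row_j ((\prod_(i | i != j) denq (v 0 i)) * numq (v 0 j))).
exists (\prod_i (denq (v 0 i))%:~R).
  by apply/prodf_neq0 => i _; rewrite intr_eq0 denq_neq0.
apply/rowP => j; rewrite !mxE intrM rmorph_prod /= numqE [in RHS](bigD1 j) //=.
ring.
Qed.

Lemma int_kernel_vector n (M : 'M[rat]_n) : \det M = 0 ->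
  exists2 z : 'rV[int]_n, z != 0 & mxZ z *m M = 0.
Proof.
move/eqP/det0P => [v v0 vM]; have [z [c c0 zE]] := rat_row_int_multiple v.
exists z; last by rewrite zE -scalemxAl vM scaler0.
apply: contra v0 => /eqP z0; move/esym/eqP: zE; rewrite z0 map_mx0.
by rewrite scalemx_eq0 (negPf c0).
Qed.

Definition central_factor (R : realType) d (F : 'M[int]_d) (C : 'M[R]_d)
    (eta : {poly rat}) : Prop :=
  [/\ (1 < size eta)%N, eta %| char_poly_Q F &
      forall lambda : complex R, root (map_poly (fun q : rat => ratr q) eta) lambda ->
        restr_eigenvalue (int_to_real_mx R F) C lambda].

Lemma central_factor_of_int_vector (R : realType) d (F : 'M[int]_d) (C : 'M[R]_d)
    (z : 'rV[int]_d) :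
  mx_invariant (int_to_real_mx R F) C -> z != 0 -> (int_to_real_mx R z <= C)%MS ->
  exists eta, central_factor F C eta.
Proof.
case: d => [|n] in F C z *; first by rewrite [z]thinmx0 eqxx.
move=> FC z0 zC; set Fq : 'M[rat]_n.+1 := mxZ F; set zq : 'rV[rat]_n.+1 := mxZ z.
have [p minp] := min_annihilator_exists Fq^T zq.
exists p; split.
- apply: min_annihilator_size_gt1 minp; apply: contra z0 => /eqP zq0.
  apply/eqP/matrixP => i j; move/matrixP/(_ i j): zq0.
  by rewrite !mxE => /eqP; rewrite intr_eq0 => /eqP.
- apply: min_annihilator_dvdp minp _.
  by rewrite -horner_mx_trmx Cayley_Hamilton trmx0 mulmx0.
- move=> l pl; have FqC : map_mx ratr Fq^T = mxC (int_to_real_mx R F)^T.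
    by rewrite !map_trmx /int_to_real_mx !map_mx_intmx.
  have [||w [w0 wC wF]] := min_annihilator_root_eigenvector (V := mxC C) minp _ _ pl.
  + by rewrite FqC -map_mxM map_submx.
  + by rewrite /zq map_mx_intmx -(map_mx_intmx (real_complex R)) map_submx.
  by exists w; rewrite map_trmx -FqC.
Qed.

Lemma central_factor_int_vector (R : realType) d (F : 'M[int]_d) (S C U : 'M[R]_d)
    eta :
  partially_hyperbolic (int_to_real_mx R F) S C U -> central_factor F C eta ->
  exists2 z : 'rV[int]_d, z != 0 & (int_to_real_mx R z <= C)%MS.
Proof.
move=> ph [gt1 _ eta_roots].
set etaC := map_poly (fun q : rat => ratr q : R[i]) eta.
have [l0 root0] : exists l, root etaC l.
  by apply/closed_rootP; rewrite size_map_poly gtn_eqF.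
have [w0 [w00 _ w0F]] := eta_roots _ root0.
case: d => [|n] in F S C U ph eta_roots w0 w00 w0F *.
  by rewrite [w0]thinmx0 eqxx in w00.
case: ph => [[FS FC FU full dir] [Q [Qinner [_ _ SC CU]]]].
set AR := int_to_real_mx R F; set Pq := horner_mx (mxZ F)^T eta.
set P := horner_mx AR^T (map_poly ratr eta).
have PE : P = map_mx ratr Pq.
  by rewrite map_horner_mx -map_trmx map_mx_intmx.
have [z z0 zP] : exists2 z : 'rV[int]_n.+1, z != 0 & mxZ z *m Pq = 0.
  apply: int_kernel_vector; apply/eqP.
  rewrite -(fmorph_eq0 (ratr : {rmorphism rat -> R[i]})) -det_map_mx.
  apply/det0P; exists w0 => //.
  rewrite map_horner_mx -map_trmx map_mx_intmx -(map_mx_intmx (real_complex R)).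
  by rewrite (horner_mx_eigenvector _ w0F) (rootP root0) scale0r.
have etaE : map_poly (real_complex R) (map_poly ratr eta) = etaC.
  by rewrite -map_poly_comp; apply: eq_map_poly => q /=; rewrite fmorph_rat.
have no_kernel V : mx_invariant AR V ->
    (forall l, restr_eigenvalue AR V l -> ~ restr_eigenvalue AR C l) ->
    forall s : 'rV[R]_n.+1, (s <= V)%MS -> s *m P = 0 -> s = 0.
  move=> FV sepV s sV sP; apply/eqP/negPn/negP => s0.
  have [l] := restr_eigenvalue_of_kernel FV s0 sV sP.
  by rewrite etaE => /eta_roots Cl /sepV.
exists z => //; apply: (kermx_sub_center dir (P := P)) full _ _ _ _ _ _.
- exact: horner_mx_stable.
- exact: horner_mx_stable.
- exact: horner_mx_stable.
- apply: no_kernel => // l Sl Cl.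
  exact: (separated_restr_eigenvalue Qinner SC Sl Cl).
- apply: no_kernel => // l Ul Cl.
  exact: (separated_restr_eigenvalue Qinner CU Cl Ul).
- by rewrite PE -[int_to_real_mx R z](map_mx_intmx ratr) -map_mxM zP map_mx0.
Qed.

Theorem lemma3p1 (R : realType) (d : nat) (F : 'M[int]_d) (S C U : 'M[R]_d) :
  \det F = 1 ->
  partially_hyperbolic (int_to_real_mx R F) S C U ->
  (katznelson_irreducible C <->
   ~ (exists eta : {poly rat},
        [/\ (1 < size eta)%N,
            eta %| char_poly_Q F &
            forall lambda : complex R,
              root (map_poly (fun q : rat => ratr q) eta) lambda ->
              restr_eigenvalue (int_to_real_mx R F) C lambda])).
Proof.
move=> _ ph; split.
- move=> irr [eta eta_central].
  have [z z0 zC] := central_factor_int_vector ph eta_central.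
  by move/eqP: z0; apply; apply: irr.
- move=> no_central z zC; apply/eqP/negPn/negP => z0; apply: no_central.
  have [[_ FC _ _ _] _] := ph.
  exact: central_factor_of_int_vector FC z0 zC.
Qed.
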